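(* Let $S\subset\Pi$. The assignments $s_{\alpha_i}(\eta,o)=(s_{\alpha_i}\eta,\ \eta(\alpha_i)^{r_i}o)$ for $\alpha_i\in S$ extend to a well-defined action of the group $W_S$ on the set $\mathbb D(S)\times\{\pm1\}$.
   Context: $\mathfrak g$ is a real split semisimple Lie algebra with simple roots $\Pi=\{\alpha_1,\dots,\alpha_l\}$, coroots $h_{\alpha_j}$, Cartan matrix $C_{i,j}=\alpha_i(h_{\alpha_j})$, Weyl group $W$. For $S\subset\Pi$, $W_S\subset W$ is the subgroup generated by the simple reflections $s_\alpha$, $\alpha\in S$; $\mathbb D(S)$ is the set of functions $\eta:S\to\{\pm1\}$ (colored Dynkin diagrams with colored set $S$). For $\alpha_i\in S$, $s_{\alpha_i}\eta\in\mathbb D(S)$ is defined by $(s_{\alpha_i}\eta)(\alpha_j)=\eta(\alpha_j)\eta(\alpha_i)^{-C_{j,i}}$ for $\alpha_j\in S$, and $r_i$ is the number of $\alpha_j\in\Pi\setminus S$ with $C_{j,i}$ odd. *)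

From HB Require Import structures.
From mathcomp Require Import all_boot all_order all_algebra.
Set Implicit Arguments. Unset Strict Implicit. Unset Printing Implicit Defensive.
Import Order.TTheory GRing.Theory Num.Theory.
Local Open Scope ring_scope.

(* C : 'M[int]_l is the Cartan matrix, C i j = alpha_i (h_{alpha_j}). *)

Definition finite_type_cartan (l : nat) (C : 'M[int]_l) : Prop :=
  [/\ (forall i, C i i = 2),
      (forall i j, i != j -> C i j <= 0),
      (forall i j, (C i j == 0) = (C j i == 0)) &
      exists d : 'I_l -> rat,
        [/\ (forall i, 0 < d i),
            (forall i j, d i * (C i j)%:~R = d j * (C j i)%:~R) &
            (forall v : 'I_l -> rat, (exists i, v i != 0) ->
               0 < \sum_(i < l) \sum_(j < l) v i * d i * (C i j)%:~R * v j)]].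

(* Simple reflection s_i acting on the root lattice Z^l (coordinates w.r.t.
   the simple roots, column convention): s_i(alpha_j) = alpha_j - C j i alpha_i.
   This is a faithful representation of the Weyl group W. *)
Definition refl (l : nat) (C : 'M[int]_l) (i : 'I_l) : 'M[int]_l :=
  \matrix_(k, j) ((k == j)%:R - (k == i)%:R * C j i).

Definition in_WS (l : nat) (C : 'M[int]_l) (S : {set 'I_l}) (g : 'M[int]_l) : Prop :=
  exists s : seq 'I_l, all (fun i => i \in S) s /\
    g = foldr (fun i M => refl C i *m M) 1%:M s.

(* A colored Dynkin diagram eta : S -> {+1,-1} is encoded as a function
   'I_l -> int with values in {1,-1} on S and equal to 1 off S. *)
Definition is_sign (x : int) : bool := (x == 1) || (x == -1).

Definition in_DS (l : nat) (S : {set 'I_l}) (eta : {ffun 'I_l -> int}) : bool :=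
  [forall i, if i \in S then is_sign (eta i) else eta i == 1].

Definition in_DSxpm (l : nat) (S : {set 'I_l}) (x : {ffun 'I_l -> int} * int) : bool :=
  in_DS S x.1 && is_sign x.2.

Definition r_ (l : nat) (C : 'M[int]_l) (S : {set 'I_l}) (i : 'I_l) : nat :=
  #|[set j : 'I_l | (j \notin S) && odd (absz (C j i))]|.

Definition s_eta (l : nat) (C : 'M[int]_l) (S : {set 'I_l}) (i : 'I_l)
  (eta : {ffun 'I_l -> int}) : {ffun 'I_l -> int} :=
  [ffun j => if j \in S then eta j * (eta i) ^ (- C j i) else eta j].

Definition s_act (l : nat) (C : 'M[int]_l) (S : {set 'I_l}) (i : 'I_l)
  (x : {ffun 'I_l -> int} * int) : {ffun 'I_l -> int} * int :=
  (s_eta C S i x.1, (x.1 i) ^+ (r_ C S i) * x.2).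

From mathcomp Require Import all_boot all_order all_algebra.
Import GRing.Theory Num.Theory.
Local Open Scope ring_scope.
Set Implicit Arguments. Unset Strict Implicit.

(* Read a colouring eta of S as the character v |-> prod_(k in S) eta_k ^ v_k of
   the root lattice Z^l (charS).  An element g of W acts on characters by
   composition with g^-1; the first component of the action restricts the new
   character to S, the sign o records its values on the simple roots outside S.
   Elements of W_S act trivially on Z^l modulo the span of S (their rows off S
   are identity rows), which is exactly what makes this restriction compatible
   with composition and the sign a cocycle.  For s_i, the formula
   s_i(alpha_j) = alpha_j - C_(j,i) alpha_i gives back the prescribed action,
   the parity of the C_(j,i) with j outside S producing r_i. *)

Section Twisting.
Variables (l : nat) (S : {set 'I_l}).
Implicit Types (A B g : 'M[int]_l) (u v : 'I_l -> int).

Section Character.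

Definition charS (eta v : 'I_l -> int) : int := \prod_(k in S) eta k ^ v k.

Variable eta : 'I_l -> int.

Lemma charS_ext u v : u =1 v -> charS eta u = charS eta v.
Proof. by move=> uv; apply: eq_bigr => k _; rewrite uv. Qed.

Lemma charS0 : charS eta (fun=> 0) = 1.
Proof. by rewrite /charS big1 // => k _; rewrite expr0z. Qed.

Lemma charS_delta j : charS eta (fun k => (k == j)%:R) = if j \in S then eta j else 1.
Proof.
rewrite /charS; case: ifP => jS.
  rewrite (bigD1 j) //= eqxx expr1z big1 ?mulr1 // => k /andP[_ /negPf->].
  exact: expr0z.
by rewrite big1 // => k kS; case: eqP => [kj|_]; [rewrite -kj kS in jS | exact: expr0z].
Qed.

Hypothesis eta_unit : {in S, forall k, eta k \is a GRing.unit}.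

Lemma charS_unit v : charS eta v \is a GRing.unit.
Proof. by apply: unitr_prod => k kS; rewrite unitrXz ?eta_unit. Qed.

Lemma charSD u v : charS eta (fun k => u k + v k) = charS eta u * charS eta v.
Proof. by rewrite -big_split; apply: eq_bigr => k kS; rewrite exprzDr ?eta_unit. Qed.

Lemma charS_sum (I : Type) (r : seq I) (P : pred I) (F : I -> 'I_l -> int) :
  charS eta (fun k => \sum_(i <- r | P i) F i k) = \prod_(i <- r | P i) charS eta (F i).
Proof.
elim: r => [|i r IH].
  by rewrite big_nil -charS0; apply: charS_ext => k /=; rewrite big_nil.
by rewrite big_cons -IH; case: ifP => Pi; rewrite -?charSD;
  apply: charS_ext => k /=; rewrite big_cons Pi.
Qed.

Lemma charSMr v (c : int) : charS eta (fun k => v k * c) = charS eta v ^ c.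
Proof.
pose units := [pred x : int | x \is a GRing.unit].
rewrite /charS (@big_morph_in _ _ units (fun x => x ^ c) 1 *%R 1 *%R).
- by apply: eq_bigr => k _; rewrite exprz_exp.
- by move=> x y ux uy; rewrite inE unitrM ux.
- exact: unitr1.
- by move=> x y ux uy; rewrite exprzMl.
- exact: exp1rz.
- by move=> k kS; rewrite inE unitrXz ?eta_unit.
Qed.

End Character.

Definition twist A (eta : 'I_l -> int) : {ffun 'I_l -> int} :=
  [ffun j => if j \in S then charS eta (fun k => A k j) else 1].

Definition rows_id_off g : Prop :=
  forall k, k \notin S -> row k g = row k 1%:M.

Lemma rows_id_offE g k j : rows_id_off g -> k \notin S -> g k j = (k == j)%:R.
Proof.
by move=> g1 kS; have := congr1 (fun r : 'rV[int]_l => r 0 j) (g1 k kS); rewrite !mxE.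
Qed.

Lemma rows_id_off_mul A B : rows_id_off A -> rows_id_off B -> rows_id_off (A *m B).
Proof. by move=> A1 B1 k kS; rewrite row_mul A1 // -row_mul mul1mx B1. Qed.

Lemma rows_id_off_invmx g : g \in unitmx -> rows_id_off g -> rows_id_off (invmx g).
Proof.
by move=> ug g1 k kS; rewrite -[invmx g]mul1mx row_mul -{1}(g1 k kS) -row_mul mulmxV.
Qed.

Lemma mulmx_rows_id_off A B m j : rows_id_off B ->
  (A *m B) m j = \sum_(k in S) A m k * B k j + (j \notin S)%:R * A m j.
Proof.
move=> B1; rewrite mxE (bigID (mem S)) /=; congr (_ + _).
rewrite (eq_bigr (fun k => A m k * (k == j)%:R)); last first.
  by move=> k kS; rewrite (rows_id_offE j B1 kS).
have [jS|jNS] := boolP (j \in S).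
  rewrite mul0r big1 // => k kS; rewrite (_ : (k == j) = false) ?mulr0 //.
  by apply: contraNF kS => /eqP->.
rewrite mul1r (bigD1 j) //= eqxx mulr1 big1 ?addr0 // => k /andP[_ /negPf->].
exact: mulr0.
Qed.

Section TwistProperties.
Variable eta : 'I_l -> int.
Hypothesis eta_unit : {in S, forall k, eta k \is a GRing.unit}.

Lemma charS_twist A v :
  charS (twist A eta) v = charS eta (fun m => \sum_(k in S) A m k * v k).
Proof. by rewrite charS_sum //; apply: eq_bigr => k kS; rewrite ffunE kS charSMr. Qed.

Lemma charS_col_mulmx A B j : rows_id_off B ->
  charS eta (fun m => (A *m B) m j) =
  charS (twist A eta) (fun k => B k j) * (if j \in S then 1 else charS eta (fun m => A m j)).
Proof.
move=> B1; rewrite (charS_ext _ (fun m => mulmx_rows_id_off A m j B1)) charSD //.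
rewrite charS_twist; congr (_ * _); case: (j \in S); last first.
  by apply: charS_ext => m; rewrite mul1r.
by rewrite -(charS0 eta); apply: charS_ext => m; rewrite mul0r.
Qed.

Lemma twist_mulmx A B : rows_id_off B -> twist (A *m B) eta = twist B (twist A eta).
Proof.
move=> B1; apply/ffunP => j; rewrite !ffunE.
by case: ifP => jS; rewrite // charS_col_mulmx // jS mulr1.
Qed.

End TwistProperties.

End Twisting.

Lemma invmxM (R : comUnitRingType) n (A B : 'M[R]_n) :
  A \in unitmx -> B \in unitmx -> invmx (A *m B) = invmx B *m invmx A.
Proof.
move=> uA uB; have uAB : A *m B \in unitmx by rewrite unitmx_mul uA.
have AB_inv : A *m B *m (invmx B *m invmx A) = 1%:M.
  by rewrite -mulmxA (mulmxA B) mulmxV // mul1mx mulmxV.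
by rewrite -[LHS]mulmx1 -AB_inv mulKmx.
Qed.

Section Action.
Variables (l : nat) (S : {set 'I_l}).
Implicit Types (g h : 'M[int]_l) (x : {ffun 'I_l -> int} * int).

Definition Wact g x : {ffun 'I_l -> int} * int :=
  (twist S (invmx g) x.1,
   \prod_(j | j \notin S) charS S x.1 (fun m => invmx g m j) * x.2).

Lemma is_signE (x : int) : is_sign x = (x \is a GRing.unit).
Proof. by []. Qed.

Lemma in_DS_unit (eta : {ffun 'I_l -> int}) :
  in_DS S eta -> {in S, forall k, eta k \is a GRing.unit}.
Proof. by move=> /forallP etaS k kS; have := etaS k; rewrite kS. Qed.

Lemma in_DS_off (eta : {ffun 'I_l -> int}) k : in_DS S eta -> k \notin S -> eta k = 1.
Proof. by move=> /forallP etaS kS; have := etaS k; rewrite (negPf kS) => /eqP. Qed.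

Lemma in_DSxpm_Wact g x : in_DSxpm S x -> in_DSxpm S (Wact g x).
Proof.
case: x => eta o /andP[/= etaS oS]; apply/andP; split => /=.
  apply/forallP => j; rewrite ffunE; case: ifP => jS; rewrite jS //.
  by rewrite is_signE; apply/charS_unit/in_DS_unit.
rewrite is_signE unitrM -[o \is a _]is_signE oS andbT; apply: unitr_prod => j _.
exact/charS_unit/in_DS_unit.
Qed.

Lemma Wact1 x : in_DSxpm S x -> Wact 1%:M x = x.
Proof.
case: x => eta o /andP[/= etaS _]; rewrite /Wact invmx1 /=.
have col1 j :
    charS S eta (fun m => (1%:M : 'M[int]_l) m j) = if j \in S then eta j else 1.
  by rewrite -charS_delta //; apply: charS_ext => m; rewrite mxE.
congr (_, _).
  apply/ffunP => j; rewrite !ffunE col1.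
  by case: ifP => jS; rewrite ?jS // (in_DS_off etaS) ?jS.
by rewrite big1 ?mul1r // => j jS; rewrite col1 (negPf jS).
Qed.

Lemma WactM g h x : g \in unitmx -> h \in unitmx -> rows_id_off S (invmx g) ->
  in_DSxpm S x -> Wact (g *m h) x = Wact g (Wact h x).
Proof.
case: x => eta o ug uh g1 /andP[/= etaS _]; have eta_unit := in_DS_unit etaS.
rewrite /Wact /= invmxM // twist_mulmx //; congr (_, _).
rewrite mulrA -big_split /=; congr (_ * _); apply: eq_bigr => j jS.
by rewrite charS_col_mulmx // (negPf jS).
Qed.

End Action.

Lemma is_sign_exprz (e n : int) : is_sign e -> e ^ n = e ^+ odd `|n|.
Proof. by case/orP=> /eqP->; rewrite ?exp1rz ?expr1n // expN1r signr_odd. Qed.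

Section Reflections.
Variables (l : nat) (C : 'M[int]_l).

Lemma reflE i : refl C i = 1%:M - \matrix_(k, j) ((k == i)%:R * C j i).
Proof. by apply/matrixP => k j; rewrite !mxE. Qed.

Lemma refl_involutive i : C i i = 2 -> refl C i *m refl C i = 1%:M.
Proof.
move=> Cii; rewrite reflE; set N := \matrix_(k, j) _.
have NN : N *m N = N *+ 2.
  apply/matrixP => k j; rewrite !mxE (bigD1 i) //= big1 => [|m /negPf mi]; last first.
    by rewrite !mxE mi mul0r mulr0.
  by rewrite !mxE eqxx mul1r Cii addr0 mulrAC mulr_natr mulr2n.
by rewrite mulmxBl !mulmxBr !mul1mx mulmx1 NN mulr2n opprB addrK subrK.
Qed.

Lemma refl_unitmx i : C i i = 2 -> refl C i \in unitmx.
Proof. by move/refl_involutive/mulmx1_unit => []. Qed.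

Lemma invmx_refl i : C i i = 2 -> invmx (refl C i) = refl C i.
Proof.
move=> Cii; rewrite -[LHS]mulmx1 -(refl_involutive Cii) mulKmx //.
exact: refl_unitmx.
Qed.

Lemma row_refl i k : k != i -> row k (refl C i) = row k 1%:M.
Proof. by move/negPf=> ki; apply/rowP => j; rewrite !mxE ki mul0r subr0. Qed.

Lemma charS_refl_col (S : {set 'I_l}) (eta : 'I_l -> int) i j :
  {in S, forall k, eta k \is a GRing.unit} -> i \in S ->
  charS S eta (fun k => refl C i k j) = (if j \in S then eta j else 1) * eta i ^ (- C j i).
Proof.
move=> eta_unit iS; have := charS_delta S eta i; rewrite iS => <-.
rewrite -charS_delta // -charSMr // -charSD //.
by apply: charS_ext => k; rewrite mxE mulrN.
Qed.

Variable S : {set 'I_l}.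
Hypothesis Cii : forall i, i \in S -> C i i = 2.

Lemma in_WS_unitmx g : in_WS C S g -> g \in unitmx.
Proof.
case=> s [sS ->]; elim: s sS => [|i s IH] /=; first by rewrite unitmx1.
by case/andP=> iS sS; rewrite unitmx_mul refl_unitmx ?Cii ?IH.
Qed.

Lemma in_WS_rows_id_off g : in_WS C S g -> rows_id_off S g.
Proof.
case=> s [sS ->]; elim: s sS => [|i s IH] /=; first by [].
case/andP=> iS sS; apply: rows_id_off_mul (IH sS) => k kS.
by apply: row_refl; apply: contraNneq kS => ->.
Qed.

Lemma r_E i : r_ C S i = (\sum_(j | j \notin S) odd `|C j i|)%N.
Proof. by rewrite /r_ -sum1dep_card big_mkcondr; apply: eq_bigr => j _; case: odd. Qed.

Lemma Wact_refl i x : i \in S -> in_DSxpm S x -> Wact S (refl C i) x = s_act C S i x.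
Proof.
case: x => eta o iS /andP[/= etaS _]; have eta_unit := in_DS_unit etaS.
rewrite /Wact /s_act /= invmx_refl ?Cii //; congr (_, _).
  apply/ffunP => j; rewrite !ffunE charS_refl_col //.
  by case: ifP => jS; rewrite ?jS ?mul1r // (in_DS_off etaS) ?jS.
have eta_i_sign : is_sign (eta i) by have := forallP etaS i; rewrite iS.
rewrite r_E -prodrXr; congr (_ * _); apply: eq_bigr => j jS.
by rewrite charS_refl_col // (negPf jS) mul1r is_sign_exprz // abszN.
Qed.

End Reflections.

Theorem proposition4p1p2 (l : nat) (C : 'M[int]_l) (S : {set 'I_l}) :
  finite_type_cartan C ->
  exists act : 'M[int]_l -> {ffun 'I_l -> int} * int -> {ffun 'I_l -> int} * int,
    [/\ (forall g x, in_WS C S g -> in_DSxpm S x -> in_DSxpm S (act g x)),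
        (forall i x, i \in S -> in_DSxpm S x -> act (refl C i) x = s_act C S i x),
        (forall x, in_DSxpm S x -> act 1%:M x = x) &
        (forall g h x, in_WS C S g -> in_WS C S h -> in_DSxpm S x ->
           act (g *m h) x = act g (act h x))].
Proof.
case=> Cii _ _ _; have Cii_S i : i \in S -> C i i = 2 by move=> _; apply: Cii.
exists (Wact S); split.
- by move=> g x _; apply: in_DSxpm_Wact.
- exact: Wact_refl.
- exact: Wact1.
- move=> g h x gW hW; apply: WactM; rewrite ?(in_WS_unitmx Cii_S) //.
  exact/rows_id_off_invmx/(in_WS_rows_id_off gW)/(in_WS_unitmx Cii_S).
Qed.
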